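(* Let $n\ge 1$ be an integer, let $C_t$ be a Liu process, and let $f,g:[0,\infty)\times\mathbb{R}^{n}\to\mathbb{R}$ be continuous functions. Let $X_t$ be a solution of the $n$-th order uncertain differential equation $$X_t^{(n)}=f\big(t,X_t,X_t^{(1)},\dots,X_t^{(n-1)}\big)+g\big(t,X_t,X_t^{(1)},\dots,X_t^{(n-1)}\big)\dot{C}_t$$ with initial conditions $X^{(k)}_0=X_0^{k}$ for $k=0,1,\dots,n-1$ (where $X_0^k$ are given real numbers). Then for every $t\ge 0$, $$X_t=\sum_{k=0}^{n-1}\frac{t^k}{k!}X_0^{k}+\frac{1}{(n-1)!}\int_{0}^{t}(t-s)^{n-1}f\big(s,X_s,X_s^{(1)},\dots,X_s^{(n-1)}\big)\,{\rm d}s+\frac{1}{(n-1)!}\int_{0}^{t}(t-s)^{n-1}g\big(s,X_s,X_s^{(1)},\dots,X_s^{(n-1)}\big)\,{\rm d}C_s,$$ where the last integral is a Liu integral.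
   Context: An uncertainty space is a triple $(\Gamma,\mathcal{L},\mathcal{M})$ where $\Gamma$ is a nonempty set, $\mathcal{L}$ a $\sigma$-algebra on $\Gamma$ and $\mathcal{M}$ an uncertain measure (in the sense of Liu's uncertainty theory). A Liu process $C_t$ is an uncertain process with $C_0=0$, almost all sample paths Lipschitz continuous, stationary and independent increments, and each increment $C_{s+t}-C_s$ a normal uncertain variable with expected value $0$ and variance $t^2$. For an uncertain process $Z_t$, the Liu integral is $\int_0^a Z_t\,{\rm d}C_t=\lim_{\Delta\to0}\sum_{i=1}^k Z_{t_i}(C_{t_{i+1}}-C_{t_i})$ over partitions $0=t_1<\dots<t_{k+1}=a$ with mesh $\Delta=\max_i|t_{i+1}-t_i|$, provided the limit exists almost surely and is finite. $\dot C_t$ denotes the formal derivative ${\rm d}C_t/{\rm d}t$. An uncertain process $X_t$ is called a solution of the $n$-th order uncertain differential equation above with initial values $X_0^k$ (the value of the $k$-th derivative at $0$, $X_0^0=X_0$) if it satisfies the uncertain integral equation $$X_t=\sum_{i=0}^{n-1}\frac{t^i}{i!}X_0^{i}+\int_0^t\int_0^{t_1}\!\!\cdots\int_0^{t_{n-1}} f\big(t_n,X_{t_n},\dots,X^{(n-1)}_{t_n}\big)\,{\rm d}t_n\,{\rm d}t_{n-1}\cdots{\rm d}t_1+\int_0^t\int_0^{t_1}\!\!\cdots\int_0^{t_{n-1}} g\big(t_n,X_{t_n},\dots,X^{(n-1)}_{t_n}\big)\,{\rm d}C_{t_n}\,{\rm d}t_{n-1}\cdots{\rm d}t_1$$ for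 all $t\ge0$, where $X^{(k)}$ denotes the $k$-th derivative in $t$. *)

From Stdlib Require Import Reals Lra Factorial.
From Coquelicot Require Import Coquelicot.
Open Scope R_scope.

Fixpoint psum (a : nat -> R) (k : nat) : R :=
  match k with
  | O => 0
  | S k' => psum a k' + a k'
  end.

Definition is_sigma_algebra {T : Type} (S : (T -> Prop) -> Prop) : Prop :=
  S (fun _ => True) /\
  (forall A, S A -> S (fun x => ~ A x)) /\
  (forall A : nat -> T -> Prop, (forall i, S (A i)) -> S (fun x => exists i, A i x)).

Definition borel (B : R -> Prop) : Prop :=
  forall S : (R -> Prop) -> Prop, is_sigma_algebra S ->
    (forall a, S (fun x => x <= a)) -> S B.

Definition uncertainty_space {Gamma : Type}
  (L : (Gamma -> Prop) -> Prop) (M : (Gamma -> Prop) -> R) : Prop :=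
  is_sigma_algebra L /\
  M (fun _ => True) = 1 /\
  (forall A, L A -> M A + M (fun x => ~ A x) = 1) /\
  (forall A : nat -> Gamma -> Prop, (forall i, L (A i)) ->
     forall s, is_series (fun i => M (A i)) s ->
       M (fun x => exists i, A i x) <= s).

Definition uncertain_variable {Gamma : Type}
  (L : (Gamma -> Prop) -> Prop) (xi : Gamma -> R) : Prop :=
  forall B, borel B -> L (fun g => B (xi g)).

Definition uncertain_process {Gamma : Type}
  (L : (Gamma -> Prop) -> Prop) (X : R -> Gamma -> R) : Prop :=
  forall t, 0 <= t -> uncertain_variable L (X t).

(* independence of the uncertain variables xi 0, ..., xi (m-1):
   M( /\_i {xi_i in B_i} ) = min_i M{xi_i in B_i} for all Borel B_i *)
Definition independent {Gamma : Type}
  (L : (Gamma -> Prop) -> Prop) (M : (Gamma -> Prop) -> R)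
  (m : nat) (xi : nat -> Gamma -> R) : Prop :=
  (forall i, (i < m)%nat -> uncertain_variable L (xi i)) /\
  forall B : nat -> R -> Prop, (forall i, (i < m)%nat -> borel (B i)) ->
    let A := fun g => forall i, (i < m)%nat -> B i (xi i g) in
    (forall i, (i < m)%nat -> M A <= M (fun g => B i (xi i g))) /\
    (exists i, (i < m)%nat /\ M A = M (fun g => B i (xi i g))).

Definition normal_distr (e sigma x : R) : R :=
  / (1 + exp (PI * (e - x) / (sqrt 3 * sigma))).

Definition liu_process {Gamma : Type}
  (L : (Gamma -> Prop) -> Prop) (M : (Gamma -> Prop) -> R)
  (C : R -> Gamma -> R) : Prop :=
  (forall g, C 0 g = 0) /\
  uncertain_process L C /\
  (exists Lam, L Lam /\ M Lam = 1 /\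
     forall g, Lam g -> exists K, forall s t, 0 <= s -> 0 <= t ->
       Rabs (C t g - C s g) <= K * Rabs (t - s)) /\
  (forall s t x, 0 <= s -> 0 <= t ->
     M (fun g => C (s + t) g - C s g <= x) = M (fun g => C t g - C 0 g <= x)) /\
  (forall (m : nat) (p : nat -> R), (1 <= m)%nat -> 0 <= p 0%nat ->
     (forall i, (i < m)%nat -> p i < p (S i)) ->
     independent L M m (fun i g => C (p (S i)) g - C (p i) g)) /\
  (forall s t x, 0 <= s -> 0 < t ->
     M (fun g => C (s + t) g - C s g <= x) = normal_distr 0 t x).

Definition is_Liu_int (Z c : R -> R) (a v : R) : Prop :=
  (a = 0 /\ v = 0) \/
  (0 < a /\
   forall eps, 0 < eps -> exists delta, 0 < delta /\
     forall (k : nat) (p : nat -> R),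
       (1 <= k)%nat -> p 0%nat = 0 -> p k = a ->
       (forall i, (i < k)%nat -> p i < p (S i)) ->
       (forall i, (i < k)%nat -> p (S i) - p i < delta) ->
       Rabs (psum (fun i => Z (p i) * (c (p (S i)) - c (p i))) k - v) < eps).

(* iterated integral: iter_int P m t v  means
   v = int_0^t int_0^{t_1} ... int_0^{t_{m-1}} (P-value at t_m) dt_m ... dt_1,
   where P s w says "the innermost integral up to s has value w". *)
Fixpoint iter_int (P : R -> R -> Prop) (m : nat) (t v : R) : Prop :=
  match m with
  | O => P t v
  | S m' => exists G : R -> R,
      (forall s, 0 <= s <= t -> iter_int P m' s (G s)) /\ is_RInt G 0 t v
  end.

(* A function of (t, x_0, ..., x_{n-1}) is encoded as f : R -> (nat -> R) -> R
   depending only on the first n coordinates. *)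
Definition depends_on_first (n : nat) (f : R -> (nat -> R) -> R) : Prop :=
  forall t x y, (forall i, (i < n)%nat -> x i = y i) -> f t x = f t y.

Definition continuous_on_Rn (n : nat) (f : R -> (nat -> R) -> R) : Prop :=
  forall t x, 0 <= t -> forall eps, 0 < eps -> exists delta, 0 < delta /\
    forall t' y, 0 <= t' -> Rabs (t' - t) < delta ->
      (forall i, (i < n)%nat -> Rabs (y i - x i) < delta) ->
      Rabs (f t' y - f t x) < eps.

(* right-sided-at-0 derivative on [0,oo) *)
Definition has_deriv_nonneg (F : R -> R) (t l : R) : Prop :=
  forall eps, 0 < eps -> exists delta, 0 < delta /\
    forall h, h <> 0 -> 0 <= t + h -> Rabs h < delta ->
      Rabs ((F (t + h) - F t) / h - l) < eps.

(* D k t g is the k-th derivative X^{(k)}_t (sample path g), D 0 = X. *)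
Definition is_solution {Gamma : Type}
  (L : (Gamma -> Prop) -> Prop) (M : (Gamma -> Prop) -> R) (n : nat)
  (f g : R -> (nat -> R) -> R) (C : R -> Gamma -> R) (X0 : nat -> R)
  (X : R -> Gamma -> R) (D : nat -> R -> Gamma -> R) : Prop :=
  uncertain_process L X /\
  D 0%nat = X /\
  exists Lam, L Lam /\ M Lam = 1 /\
    forall w, Lam w ->
      (forall k, (k + 1 < n)%nat -> forall t, 0 <= t ->
         has_deriv_nonneg (fun s => D k s w) t (D (S k) t w)) /\
      (forall k, (k < n)%nat -> D k 0 w = X0 k) /\
      (forall t, 0 <= t -> exists vf vg,
         iter_int (fun s v => is_RInt (fun r => f r (fun k => D k r w)) 0 s v)
                  (n - 1) t vf /\
         iter_int (fun s v => is_Liu_int (fun r => g r (fun k => D k r w))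
                                         (fun r => C r w) s v)
                  (n - 1) t vg /\
         X t w = psum (fun i => t ^ i / INR (fact i) * X0 i) n + vf + vg).

From Stdlib Require Import Reals Factorial Lra Lia ClassicalEpsilon FunctionalExtensionality.
From Coquelicot Require Import Coquelicot.
Open Scope R_scope.

(* The theorem is Cauchy's formula for repeated integration, applied separately to the
   iterated Riemann integral of f and to the iterated Liu integral of g.  Both cases rest
   on one summation by parts: if V is the indefinite Liu integral of Z against c, Abel
   summation turns a Liu sum of (t - s)^m Z against c into a Riemann sum of
   m (t - s)^(m-1) V, up to errors controlled by the Lipschitz and second-order Taylor
   bounds of s^m and by the uniform approximation of V by partial Liu sums.  A Riemann
   integral is the Liu integral against the identity, so induction on m gives the
   Riemann formula; the Liu formula peels off the innermost Liu integral V and applies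
   the Riemann formula to the remaining iterated integral of V. *)

(** * Finite sums *)

Lemma psum_ext (a b : nat -> R) k :
  (forall i, (i < k)%nat -> a i = b i) -> psum a k = psum b k.
Proof.
  induction k as [|k IH]; intros Hab; simpl; [reflexivity|].
  rewrite IH by (intros i Hi; apply Hab; lia). rewrite Hab by lia. reflexivity.
Qed.

Lemma psum_add (a b : nat -> R) k : psum (fun i => a i + b i) k = psum a k + psum b k.
Proof. induction k as [|k IH]; simpl; [lra|]. rewrite IH. ring. Qed.

Lemma psum_scal (a : nat -> R) c k : psum (fun i => c * a i) k = c * psum a k.
Proof. induction k as [|k IH]; simpl; [ring|]. rewrite IH. ring. Qed.

Lemma psum_cat (a : nat -> R) k1 k2 :
  psum a (k1 + k2) = psum a k1 + psum (fun i => a (k1 + i)%nat) k2.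
Proof.
  induction k2 as [|k2 IH]; simpl; [rewrite Nat.add_0_r; ring|].
  rewrite Nat.add_succ_r. simpl. rewrite IH. ring.
Qed.

Lemma psum_abs (a : nat -> R) k : Rabs (psum a k) <= psum (fun i => Rabs (a i)) k.
Proof.
  induction k as [|k IH]; simpl; [rewrite Rabs_R0; lra|].
  eapply Rle_trans; [apply Rabs_triang|]. lra.
Qed.

Lemma psum_le (a b : nat -> R) k :
  (forall i, (i < k)%nat -> a i <= b i) -> psum a k <= psum b k.
Proof.
  induction k as [|k IH]; intros Hab; simpl; [lra|].
  apply Rplus_le_compat; [apply IH; intros i Hi|]; apply Hab; lia.
Qed.

Lemma psum_telescope (p : nat -> R) k : psum (fun i => p (S i) - p i) k = p k - p O.
Proof. induction k as [|k IH]; simpl; [ring|]. rewrite IH. ring. Qed.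

Lemma psum_by_parts (h a : nat -> R) k :
  psum (fun i => h i * a i) k
  = h k * psum a k + psum (fun i => (h i - h (S i)) * psum a (S i)) k.
Proof. induction k as [|k IH]; simpl; [ring|]. rewrite IH. simpl. ring. Qed.

Lemma psum_abs_le_steps (x p : nat -> R) C k :
  (forall i, (i < k)%nat -> Rabs (x i) <= C * (p (S i) - p i)) ->
  Rabs (psum x k) <= C * (p k - p O).
Proof.
  intros Hx. rewrite <- psum_telescope, <- psum_scal.
  eapply Rle_trans; [apply psum_abs|]. now apply psum_le.
Qed.

Lemma psum_mul_abs_le_steps (x y p : nat -> R) a b k :
  (forall i, (i < k)%nat -> Rabs (x i) <= a * (p (S i) - p i)) ->
  (forall i, (i < k)%nat -> Rabs (y i) <= b) ->
  Rabs (psum (fun i => x i * y i) k) <= a * b * (p k - p O).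
Proof.
  intros Hx Hy. apply psum_abs_le_steps. intros i Hi. rewrite Rabs_mult.
  replace (a * b * (p (S i) - p i)) with (a * (p (S i) - p i) * b) by ring.
  apply Rmult_le_compat; auto using Rabs_pos.
Qed.

(** * Fine partitions and Liu sums *)

Definition fine_partition (a b d : R) (k : nat) (p : nat -> R) : Prop :=
  (1 <= k)%nat /\ p O = a /\ p k = b /\
  (forall i, (i < k)%nat -> p i < p (S i)) /\
  (forall i, (i < k)%nat -> p (S i) - p i < d).

Lemma fine_partition_exists a b d : a < b -> 0 < d -> exists k p, fine_partition a b d k p.
Proof.
  intros Hab Hd.
  destruct (nfloor_ex ((b - a) / d)) as [N [_ HN]].
  { apply Rlt_le, Rdiv_lt_0_compat; lra. }
  assert (HSN : 0 < INR (S N)) by (apply lt_0_INR; lia).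
  set (h := (b - a) / INR (S N)).
  assert (Hh : 0 < h) by (apply Rdiv_lt_0_compat; lra).
  assert (Hhd : h < d).
  { apply Rlt_div_l; [lra|]. rewrite S_INR, Rmult_comm. apply Rlt_div_l; lra. }
  exists (S N), (fun i => a + INR i * h).
  repeat split; [lia | simpl; ring | unfold h; field; lra | |];
    intros i _; rewrite S_INR; lra.
Qed.

Lemma fine_partition_le a b d k p : fine_partition a b d k p ->
  forall i j, (i <= j <= k)%nat -> p i <= p j.
Proof.
  intros (_ & _ & _ & Hinc & _) i j Hij.
  induction j as [|j IH]; [replace i with O by lia; lra|].
  destruct (Nat.eq_dec i (S j)) as [->|Hne]; [lra|].
  assert (p i <= p j) by (apply IH; lia).
  assert (p j < p (S j)) by (apply Hinc; lia). lra.
Qed.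

Lemma fine_partition_range a b d k p : fine_partition a b d k p ->
  forall i, (i <= k)%nat -> a <= p i <= b.
Proof.
  intros Hp i Hi. pose proof Hp as (_ & H0 & Hk & _).
  rewrite <- H0, <- Hk at 1. split; apply (fine_partition_le _ _ _ _ _ Hp); lia.
Qed.

Lemma fine_partition_lt a b d k p : fine_partition a b d k p ->
  forall i j, (i < j <= k)%nat -> p i < p j.
Proof.
  intros Hp i j Hij. pose proof Hp as (_ & _ & _ & Hinc & _).
  assert (p i < p (S i)) by (apply Hinc; lia).
  assert (p (S i) <= p j) by (apply (fine_partition_le _ _ _ _ _ Hp); lia). lra.
Qed.

Lemma fine_partition_mesh_le a b d d' k p :
  fine_partition a b d k p -> d <= d' -> fine_partition a b d' k p.
Proof.
  intros (Hk & H0 & Hb & Hinc & Hmesh) Hd. repeat split; auto.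
  intros i Hi. specialize (Hmesh i Hi). lra.
Qed.

Lemma fine_partition_prefix a b d k p j : (1 <= j <= k)%nat ->
  fine_partition a b d k p -> fine_partition a (p j) d j p.
Proof.
  intros Hj (Hk & H0 & Hb & Hinc & Hmesh).
  repeat split; auto; try lia; intros i Hi; [apply Hinc | apply Hmesh]; lia.
Qed.

Definition cat_points (k1 : nat) (p1 p2 : nat -> R) (i : nat) : R :=
  if (i <=? k1)%nat then p1 i else p2 (i - k1)%nat.

Lemma cat_points_l k1 p1 p2 i : (i <= k1)%nat -> cat_points k1 p1 p2 i = p1 i.
Proof. intros Hi. unfold cat_points. now rewrite (proj2 (Nat.leb_le _ _) Hi). Qed.

Lemma cat_points_r k1 p1 p2 i : p1 k1 = p2 O -> cat_points k1 p1 p2 (k1 + i) = p2 i.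
Proof.
  intros Hj. unfold cat_points. destruct (Nat.leb_spec (k1 + i) k1).
  - replace i with O by lia. now rewrite Nat.add_0_r.
  - f_equal. lia.
Qed.

Lemma fine_partition_cat a b c d k1 p1 k2 p2 :
  fine_partition a b d k1 p1 -> fine_partition b c d k2 p2 ->
  fine_partition a c d (k1 + k2) (cat_points k1 p1 p2).
Proof.
  intros (Hk1 & H01 & Hb1 & Hinc1 & Hmesh1) (Hk2 & H02 & Hb2 & Hinc2 & Hmesh2).
  assert (Hj : p1 k1 = p2 O) by congruence.
  assert (Hsplit : forall i, (i < k1 + k2)%nat ->
    (cat_points k1 p1 p2 i = p1 i /\ cat_points k1 p1 p2 (S i) = p1 (S i) /\ (i < k1)%nat) \/
    exists j, (j < k2)%nat /\ cat_points k1 p1 p2 i = p2 j /\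
              cat_points k1 p1 p2 (S i) = p2 (S j)).
  { intros i Hi. destruct (Nat.lt_ge_cases i k1).
    - left. now rewrite !cat_points_l by lia.
    - right. exists (i - k1)%nat. split; [lia|].
      replace i with (k1 + (i - k1))%nat at 1 by lia.
      replace (S i) with (k1 + S (i - k1))%nat by lia.
      now rewrite !cat_points_r. }
  repeat split; [lia | now rewrite cat_points_l by lia |
                 now rewrite cat_points_r | |];
    intros i Hi; destruct (Hsplit i Hi) as [(-> & -> & Hi1)|(j & Hj2 & -> & ->)];
    auto.
Qed.

Definition Liu_sum (Z c : R -> R) (p : nat -> R) (k : nat) : R :=
  psum (fun i => Z (p i) * (c (p (S i)) - c (p i))) k.

Lemma Liu_sum_cat Z c k1 p1 k2 p2 : p1 k1 = p2 O ->
  Liu_sum Z c (cat_points k1 p1 p2) (k1 + k2) = Liu_sum Z c p1 k1 + Liu_sum Z c p2 k2.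
Proof.
  intros Hj. unfold Liu_sum. rewrite psum_cat. f_equal; apply psum_ext; intros i Hi.
  - now rewrite !cat_points_l by lia.
  - rewrite <- Nat.add_succ_r. now rewrite !cat_points_r.
Qed.

Lemma is_Liu_int_fine Z c a v : 0 < a ->
  is_Liu_int Z c a v <->
  forall e, 0 < e -> exists d, 0 < d /\
    forall k p, fine_partition 0 a d k p -> Rabs (Liu_sum Z c p k - v) < e.
Proof.
  intros Ha; split.
  - intros [[-> _]|[_ H]] e He; [lra|].
    destruct (H e He) as [d [Hd K]]. exists d; split; [exact Hd|].
    intros k p (Hk & H0 & Hka & Hinc & Hmesh). now apply K.
  - intros H. right; split; [exact Ha|]. intros e He.
    destruct (H e He) as [d [Hd K]]. exists d; split; [exact Hd|].
    intros k p Hk H0 Hka Hinc Hmesh. apply K. repeat split; assumption.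
Qed.

Lemma is_Liu_int_0 Z c v : is_Liu_int Z c 0 v -> v = 0.
Proof. intros [[_ Hv]|[Ha _]]; [exact Hv | lra]. Qed.

Lemma is_Liu_int_unique Z c a v1 v2 :
  is_Liu_int Z c a v1 -> is_Liu_int Z c a v2 -> v1 = v2.
Proof.
  intros H1 H2. destruct (Req_dec a 0) as [->|Ha0].
  { now rewrite (is_Liu_int_0 _ _ _ H1), (is_Liu_int_0 _ _ _ H2). }
  assert (Ha : 0 < a) by (destruct H1 as [[]|[]]; lra).
  rewrite is_Liu_int_fine in H1, H2 by exact Ha.
  apply cond_eq. intros e He.
  destruct (H1 (e / 2)) as [d1 [Hd1 K1]]; [lra|].
  destruct (H2 (e / 2)) as [d2 [Hd2 K2]]; [lra|].
  destruct (fine_partition_exists 0 a (Rmin d1 d2)) as [k [p Hp]];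
    [lra | now apply Rmin_pos|].
  specialize (K1 k p (fine_partition_mesh_le _ _ _ _ _ _ Hp (Rmin_l _ _))).
  specialize (K2 k p (fine_partition_mesh_le _ _ _ _ _ _ Hp (Rmin_r _ _))).
  apply Rabs_def2 in K1, K2. apply Rabs_def1; lra.
Qed.

Lemma Liu_sum_prefix_close Z c t V : 0 < t ->
  (forall u, 0 <= u <= t -> is_Liu_int Z c u (V u)) ->
  forall eta, 0 < eta -> exists d, 0 < d /\ forall k p, fine_partition 0 t d k p ->
    forall j, (j <= k)%nat -> Rabs (Liu_sum Z c p j - V (p j)) <= eta.
Proof.
  intros Ht HV eta Heta.
  assert (HVt := proj1 (is_Liu_int_fine _ _ _ _ Ht) (HV t ltac:(lra))).
  destruct (HVt eta Heta) as [d [Hd Kt]].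
  exists d. split; [exact Hd|]. intros k p Hp j Hj.
  pose proof Hp as (_ & H0 & Hpk & _).
  destruct (Nat.eq_dec j O) as [->|Hj0].
  { rewrite H0, (is_Liu_int_0 Z c (V 0)) by (apply HV; lra).
    unfold Liu_sum; simpl. rewrite Rminus_0_r, Rabs_R0. lra. }
  destruct (Nat.eq_dec j k) as [->|Hjk].
  { rewrite Hpk. now apply Rlt_le, Kt. }
  (* Extend both [p] restricted to [0, p j] and an arbitrary fine partition of [0, p j]
     by the same partition of [p j, t]: comparing the two extensions transfers the
     approximation of [V t] to [V (p j)]. *)
  assert (Hu : 0 < p j < t).
  { split; [rewrite <- H0 | rewrite <- Hpk]; apply (fine_partition_lt _ _ _ _ _ Hp); lia. }
  apply Rle_plus_epsilon. intros e He.
  destruct (proj1 (is_Liu_int_fine _ _ _ _ (proj1 Hu)) (HV (p j) ltac:(lra)) (e / 2))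
    as [d1 [Hd1 K1]]; [lra|].
  destruct (HVt (e / 2)) as [d2 [Hd2 K2]]; [lra|].
  destruct (fine_partition_exists 0 (p j) (Rmin d1 d2)) as [k1 [q1 Hq1]];
    [lra | now apply Rmin_pos|].
  destruct (fine_partition_exists (p j) t (Rmin d d2)) as [k2 [q2 Hq2]];
    [lra | now apply Rmin_pos|].
  assert (Hpu : p j = q2 O) by (now destruct Hq2 as (_ & -> & _)).
  assert (Hq1u : q1 k1 = q2 O) by (now destruct Hq1 as (_ & _ & -> & _)).
  assert (A1 := K1 k1 q1 (fine_partition_mesh_le _ _ _ _ _ _ Hq1 (Rmin_l _ _))).
  assert (A2 := K2 _ _ (fine_partition_cat _ _ _ _ _ _ _ _
                  (fine_partition_mesh_le _ _ _ _ _ _ Hq1 (Rmin_r _ _))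
                  (fine_partition_mesh_le _ _ _ _ _ _ Hq2 (Rmin_r _ _)))).
  assert (Hj1 : (1 <= j <= k)%nat) by lia.
  assert (A3 := Kt _ _ (fine_partition_cat _ _ _ _ _ _ _ _
                  (fine_partition_prefix _ _ _ _ _ _ Hj1 Hp)
                  (fine_partition_mesh_le _ _ _ _ _ _ Hq2 (Rmin_l _ _)))).
  rewrite Liu_sum_cat in A2, A3 by assumption.
  apply Rabs_def2 in A1, A2, A3. apply Rabs_le. lra.
Qed.

(** * Riemann sums *)

Fixpoint tagged_seq (k : nat) (p xi : nat -> R) : @SF_seq R :=
  match k with
  | O => SF_nil (p O)
  | S k' => SF_cons (p O, xi O) (tagged_seq k' (fun i => p (S i)) (fun i => xi (S i)))
  end.

Lemma tagged_seq_h k p xi : SF_h (tagged_seq k p xi) = p O.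
Proof. now destruct k. Qed.

Lemma tagged_seq_size k : forall p xi, SF_size (tagged_seq k p xi) = k.
Proof.
  induction k as [|k IH]; intros p xi; [reflexivity|].
  simpl. now rewrite SF_size_cons, IH.
Qed.

Lemma tagged_seq_last k : forall p xi x0, seq.last x0 (SF_lx (tagged_seq k p xi)) = p k.
Proof.
  induction k as [|k IH]; intros p xi x0; [reflexivity|].
  exact (IH (fun i => p (S i)) (fun i => xi (S i)) (p O)).
Qed.

Lemma Riemann_sum_tagged_seq (f : R -> R) k : forall p xi,
  Riemann_sum f (tagged_seq k p xi) = psum (fun i => f (xi i) * (p (S i) - p i)) k.
Proof.
  induction k as [|k IH]; intros p xi; [reflexivity|].
  simpl tagged_seq. rewrite Riemann_sum_cons, IH, tagged_seq_h.
  change (S k) with (1 + k)%nat. rewrite psum_cat. simpl.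
  unfold plus, scal; simpl. unfold mult; simpl. ring.
Qed.

Lemma tagged_seq_step k : forall p xi d, 0 < d ->
  (forall i, (i < k)%nat -> Rabs (p (S i) - p i) < d) ->
  seq_step (SF_lx (tagged_seq k p xi)) < d.
Proof.
  induction k as [|k IH]; intros p xi d Hd Hp; [exact Hd|].
  assert (Hstep : seq_step (SF_lx (tagged_seq (S k) p xi))
    = Rmax (Rabs (p 1%nat - p O))
           (seq_step (SF_lx (tagged_seq k (fun i => p (S i)) (fun i => xi (S i)))))).
  { destruct k; reflexivity. }
  rewrite Hstep. apply Rmax_lub_lt; [apply Hp; lia|].
  apply IH; [exact Hd|]. intros i Hi. apply Hp. lia.
Qed.

Lemma tagged_seq_pointed k : forall p xi,
  (forall i, (i < k)%nat -> p i <= xi i <= p (S i)) -> pointed_subdiv (tagged_seq k p xi).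
Proof.
  induction k as [|k IH]; intros p xi Hxi i Hi; rewrite tagged_seq_size in Hi; [lia|].
  destruct i as [|i].
  - simpl. rewrite tagged_seq_h. apply Hxi. lia.
  - apply (IH (fun j => p (S j)) (fun j => xi (S j))).
    + intros j Hj. apply Hxi. lia.
    + rewrite tagged_seq_size. lia.
Qed.

Lemma is_RInt_fine (f : R -> R) a b l : a < b -> is_RInt f a b l ->
  forall e, 0 < e -> exists d, 0 < d /\ forall k p xi, fine_partition a b d k p ->
    (forall i, (i < k)%nat -> p i <= xi i <= p (S i)) ->
    Rabs (psum (fun i => f (xi i) * (p (S i) - p i)) k - l) < e.
Proof.
  intros Hab Hf e He.
  destruct (Hf _ (locally_ball l (mkposreal e He))) as [d Hd].
  exists d. split; [apply cond_pos|].
  intros k p xi (_ & H0 & Hb & Hinc & Hmesh) Hxi.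
  assert (Hstep : seq_step (SF_lx (tagged_seq k p xi)) < d).
  { apply tagged_seq_step; [apply cond_pos|]. intros i Hi.
    specialize (Hinc i Hi). rewrite Rabs_pos_eq by lra. now apply Hmesh. }
  assert (Hends : pointed_subdiv (tagged_seq k p xi) /\
    SF_h (tagged_seq k p xi) = Rmin a b /\
    seq.last (SF_h (tagged_seq k p xi)) (SF_lx (tagged_seq k p xi)) = Rmax a b).
  { rewrite tagged_seq_h, tagged_seq_last, Rmin_left, Rmax_right by lra.
    split; [now apply tagged_seq_pointed | split; assumption]. }
  specialize (Hd _ Hstep Hends).
  rewrite sign_eq_1, Riemann_sum_tagged_seq in Hd by lra.
  change (Rabs (1 * psum (fun i => f (xi i) * (p (S i) - p i)) k - l) < e) in Hd.
  now rewrite Rmult_1_l in Hd.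
Qed.

Lemma is_RInt_is_Liu_int (f : R -> R) a l : 0 <= a ->
  is_RInt f 0 a l -> is_Liu_int f (fun r => r) a l.
Proof.
  intros Ha Hf. destruct (Req_dec a 0) as [->|Ha0].
  - left. split; [reflexivity|].
    rewrite <- (is_RInt_unique _ _ _ _ Hf). exact (RInt_point 0 f).
  - apply is_Liu_int_fine; [lra|]. intros e He.
    destruct (is_RInt_fine f 0 a l ltac:(lra) Hf e He) as [d [Hd K]].
    exists d; split; [exact Hd|]. intros k p Hp. apply (K k p p Hp).
    intros i Hi. destruct Hp as (_ & _ & _ & Hinc & _). specialize (Hinc i Hi). lra.
Qed.

Lemma ex_RInt_bounded (f : R -> R) a b : a <= b -> ex_RInt f a b ->
  exists B, forall x, a <= x <= b -> Rabs (f x) <= B.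
Proof.
  intros Hab Hf. destruct (ex_RInt_ub f a b Hf) as [B HB].
  rewrite Rmin_left, Rmax_right in HB by lra. exists B. exact HB.
Qed.

(** * Lipschitz multiples of integrable functions *)

(* [filterlim_RInt] needs uniform convergence on all of R, so the step approximations
   below are cut off outside (a, b). *)
Definition restrict (a b : R) (F : R -> R) (x : R) : R :=
  if Rlt_dec a x then if Rlt_dec x b then F x else 0 else 0.

Lemma restrict_in a b F x : a < x < b -> restrict a b F x = F x.
Proof.
  intros [Hax Hxb]. unfold restrict.
  destruct (Rlt_dec a x); [|lra]. destruct (Rlt_dec x b); [reflexivity | lra].
Qed.

Lemma restrict_out a b F x : ~ (a < x < b) -> restrict a b F x = 0.
Proof.
  intros Hx. unfold restrict.
  destruct (Rlt_dec a x); [|reflexivity]. destruct (Rlt_dec x b); [lra | reflexivity].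
Qed.

Definition grid_floor (a h x : R) : R := a + h * IZR (Int_part ((x - a) / h)).

Lemma grid_floor_spec a h x : 0 < h -> a <= x ->
  a <= grid_floor a h x <= x /\ x < grid_floor a h x + h.
Proof.
  intros Hh Hx. unfold grid_floor. set (r := (x - a) / h).
  destruct (base_Int_part r) as [Hle Hgt].
  assert (Hr : x = a + h * r) by (unfold r; field; lra).
  assert (Hz : (-1 < Int_part r)%Z).
  { apply lt_IZR. assert (0 <= r) by (unfold r; apply Rle_div_r; lra). lra. }
  assert (0 <= IZR (Int_part r)) by (apply IZR_le; lia).
  nra.
Qed.

Lemma grid_floor_on_cell a h (j : nat) x : 0 < h ->
  a + INR j * h < x < a + INR (S j) * h -> grid_floor a h x = a + INR j * h.
Proof.
  intros Hh Hx. unfold grid_floor. rewrite S_INR in Hx.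
  rewrite <- (Int_part_spec ((x - a) / h) (Z.of_nat j)), <- INR_IZR_INZ; [ring|].
  rewrite <- INR_IZR_INZ. split.
  - cut ((x - a) / h < INR j + 1); [lra|]. apply Rlt_div_l; lra.
  - apply Rle_div_r; lra.
Qed.

Lemma eventually_div_INR_lt C eps : 0 < eps -> eventually (fun N => C / INR (S N) < eps).
Proof.
  intros He. destruct (nfloor_ex (Rabs C / eps)) as [N0 [_ HN0]].
  { apply Rle_div_r; [lra|]. rewrite Rmult_0_l. apply Rabs_pos. }
  exists N0. intros N HN.
  assert (HSN : INR N0 + 1 <= INR (S N)) by (rewrite S_INR; apply Rplus_le_compat_r, le_INR; lia).
  apply Rlt_div_l in HN0; [|lra].
  apply Rlt_div_l; [apply lt_0_INR; lia|].
  pose proof (Rle_abs C). nra.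
Qed.

Section LipschitzTimesIntegrable.

Variables (q psi : R -> R) (a b L : R).
Hypothesis Hab : a < b.
Hypothesis Hpsi : ex_RInt psi a b.
Hypothesis Hq : forall x y, a <= x <= b -> a <= y <= b -> Rabs (q x - q y) <= L * Rabs (x - y).

Let mesh (N : nat) : R := (b - a) / INR (S N).

Let step_approx (N : nat) : R -> R :=
  restrict a b (fun x => q (grid_floor a (mesh N) x) * psi x).

Lemma mesh_pos N : 0 < mesh N.
Proof. apply Rdiv_lt_0_compat; [lra | apply lt_0_INR; lia]. Qed.

Lemma ex_RInt_step_approx N : ex_RInt (step_approx N) a b.
Proof.
  assert (Hh := mesh_pos N).
  assert (Hend : a + INR (S N) * mesh N = b).
  { unfold mesh. field. apply not_0_INR. lia. }
  assert (Hcells : forall j, (j <= S N)%nat -> ex_RInt (step_approx N) a (a + INR j * mesh N)).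
  { induction j as [|j IH]; intros Hj.
    - rewrite Rmult_0_l, Rplus_0_r. apply ex_RInt_point.
    - apply ex_RInt_Chasles with (a + INR j * mesh N); [apply IH; lia|].
      assert (HjN : INR (S j) * mesh N <= INR (S N) * mesh N).
      { apply Rmult_le_compat_r; [lra | apply le_INR; lia]. }
      assert (0 <= INR j * mesh N) by (apply Rmult_le_pos; [apply pos_INR | lra]).
      rewrite S_INR in HjN |- *.
      assert (Hpsi_j : ex_RInt psi (a + INR j * mesh N) (a + (INR j + 1) * mesh N)).
      { apply (@ex_RInt_Chasles_1 R_CompleteNormedModule _ _ _ b); [lra|].
        apply (@ex_RInt_Chasles_2 R_CompleteNormedModule _ a); [lra | exact Hpsi]. }
      apply ex_RInt_ext with (fun x => q (a + INR j * mesh N) * psi x).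
      + intros x Hx. rewrite Rmin_left, Rmax_right in Hx by lra.
        unfold step_approx. rewrite restrict_in by lra.
        rewrite (grid_floor_on_cell _ _ j) by (rewrite ?S_INR; lra). reflexivity.
      + exact (@ex_RInt_scal R_NormedModule psi _ _ _ Hpsi_j). }
  rewrite <- Hend. apply Hcells. lia.
Qed.

Lemma step_approx_cvg :
  filterlim step_approx eventually (locally (restrict a b (fun x => q x * psi x))).
Proof.
  destruct (ex_RInt_bounded psi a b ltac:(lra) Hpsi) as [B HB].
  intros P [eps HP].
  destruct (eventually_div_INR_lt ((Rabs L + 1) * (Rabs B + 1) * (b - a)) eps (cond_pos eps))
    as [N0 HN0].
  exists N0. intros N HN. apply HP. intros x.
  change (Rabs (step_approx N x - restrict a b (fun x => q x * psi x) x) < eps).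
  unfold step_approx.
  destruct (Rlt_dec a x) as [Hax|Hax]; [destruct (Rlt_dec x b) as [Hxb|Hxb]|];
    [| rewrite !restrict_out by lra; rewrite Rminus_0_r, Rabs_R0; apply cond_pos ..].
  rewrite !restrict_in by lra.
  assert (Hh := mesh_pos N).
  destruct (grid_floor_spec a (mesh N) x Hh ltac:(lra)) as [Hg1 Hg2].
  set (g := grid_floor a (mesh N) x) in *.
  assert (Hqx : Rabs (q g - q x) <= (Rabs L + 1) * mesh N).
  { eapply Rle_trans; [apply Hq; lra|].
    rewrite Rabs_minus_sym, Rabs_pos_eq by lra.
    pose proof (Rle_abs L). pose proof (Rabs_pos L). nra. }
  assert (Hpx : Rabs (psi x) <= Rabs B + 1).
  { pose proof (Rle_abs B). specialize (HB x ltac:(lra)). lra. }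
  replace (q g * psi x - q x * psi x) with ((q g - q x) * psi x) by ring.
  rewrite Rabs_mult. eapply Rle_lt_trans.
  { apply Rmult_le_compat; [apply Rabs_pos | apply Rabs_pos | exact Hqx | exact Hpx]. }
  specialize (HN0 N HN). unfold mesh. unfold Rdiv in HN0 |- *. lra.
Qed.

Lemma ex_RInt_lipschitz_mult : ex_RInt (fun x => q x * psi x) a b.
Proof.
  destruct (filterlim_RInt step_approx a b eventually eventually_filter _
              (fun N => RInt (step_approx N) a b)
              (fun N => RInt_correct _ _ _ (ex_RInt_step_approx N)) step_approx_cvg)
    as [I [_ HI]].
  exists I. apply is_RInt_ext with (restrict a b (fun x => q x * psi x)); [|exact HI].
  intros x Hx. rewrite Rmin_left, Rmax_right in Hx by lra. now rewrite restrict_in.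
Qed.

End LipschitzTimesIntegrable.

(** * Summation by parts for Liu integrals *)

Lemma pow_lipschitz m T : 0 <= T -> exists L, 0 <= L /\
  forall x y, 0 <= x <= T -> 0 <= y <= T -> Rabs (x ^ m - y ^ m) <= L * Rabs (x - y).
Proof.
  intros HT. induction m as [|m [L [HL0 HL]]].
  { exists 0. split; [lra|]. intros x y _ _. simpl. rewrite Rminus_diag, Rabs_R0. lra. }
  exists (T * L + T ^ m). split; [pose proof (pow_le T m HT); nra|].
  intros x y Hx Hy.
  replace (x ^ S m - y ^ S m) with (x * (x ^ m - y ^ m) + y ^ m * (x - y)) by (simpl; ring).
  eapply Rle_trans; [apply Rabs_triang|]. rewrite !Rabs_mult.
  specialize (HL x y Hx Hy).
  assert (Rabs x <= T) by (rewrite Rabs_pos_eq; lra).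
  assert (Rabs (y ^ m) <= T ^ m) by (rewrite Rabs_pos_eq by (apply pow_le; lra); apply pow_incr; lra).
  pose proof (Rabs_pos x). pose proof (Rabs_pos (x - y)). pose proof (Rabs_pos (x ^ m - y ^ m)).
  nra.
Qed.

Lemma pow_second_order m T : 0 <= T -> exists K, 0 <= K /\
  forall u d, 0 <= u -> 0 <= d -> u + d <= T ->
    Rabs ((u + d) ^ m - u ^ m - INR m * u ^ pred m * d) <= K * d ^ 2.
Proof.
  intros HT. induction m as [|m [K [HK0 HK]]].
  { exists 0. split; [lra|]. intros u d _ _ _. simpl.
    replace (1 - 1 - 0 * 1 * d) with 0 by ring. rewrite Rabs_R0. lra. }
  exists (T * K + INR m * T ^ pred m).
  split; [pose proof (pow_le T (pred m) HT); pose proof (pos_INR m); nra|].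
  intros u d Hu Hd Hud.
  replace ((u + d) ^ S m - u ^ S m - INR (S m) * u ^ pred (S m) * d)
    with ((u + d) * ((u + d) ^ m - u ^ m - INR m * u ^ pred m * d)
          + INR m * u ^ pred m * d ^ 2)
    by (rewrite S_INR; destruct m; simpl; ring).
  eapply Rle_trans; [apply Rabs_triang|]. rewrite !Rabs_mult.
  specialize (HK u d Hu Hd Hud).
  rewrite (Rabs_pos_eq (u + d)), (Rabs_pos_eq (INR m)), (Rabs_pos_eq (d ^ 2))
    by (try apply pos_INR; nra).
  assert (Rabs (u ^ pred m) <= T ^ pred m)
    by (rewrite Rabs_pos_eq by (apply pow_le; lra); apply pow_incr; lra).
  pose proof (Rabs_pos ((u + d) ^ m - u ^ m - INR m * u ^ pred m * d)).
  pose proof (Rabs_pos (u ^ pred m)). pose proof (pos_INR m).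
  assert (0 <= d ^ 2) by nra.
  assert ((u + d) * Rabs ((u + d) ^ m - u ^ m - INR m * u ^ pred m * d) <= T * (K * d ^ 2))
    by (apply Rmult_le_compat; lra).
  assert (INR m * Rabs (u ^ pred m) * d ^ 2 <= INR m * T ^ pred m * d ^ 2)
    by (apply Rmult_le_compat_r; [lra | apply Rmult_le_compat_l; lra]).
  nra.
Qed.

Lemma mul_div_succ_le x e : 0 <= x -> 0 <= e -> x * (e / (x + 1)) <= e.
Proof.
  intros Hx He. assert (0 <= e / (x + 1)) by (apply Rle_div_r; lra).
  apply Rle_trans with ((x + 1) * (e / (x + 1))); [nra | right; field; lra].
Qed.

Section LiuByParts.

Variables (Z c V : R -> R) (t B Iv : R) (m : nat).
Hypothesis Ht : 0 < t.
Hypothesis Hm : (1 <= m)%nat.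
Hypothesis HV : forall u, 0 <= u <= t -> is_Liu_int Z c u (V u).
Hypothesis HB : forall u, 0 <= u <= t -> Rabs (V u) <= B.
Hypothesis HI : is_RInt (fun s => (t - s) ^ pred m * V s) 0 t Iv.

(* Abel summation (the boundary term vanishes since (t - t)^m = 0), then each increment
   of (t - s)^m is split into its first-order part and a second-order remainder. *)
Lemma Liu_sum_pow_decomp k p : p k = t ->
  Liu_sum (fun s => (t - s) ^ m * Z s) c p k
  = psum (fun i => ((t - p i) ^ m - (t - p (S i)) ^ m)
                   * (Liu_sum Z c p (S i) - V (p (S i)))) k
  + psum (fun i => ((t - p i) ^ m - (t - p (S i)) ^ m
                    - INR m * (t - p (S i)) ^ pred m * (p (S i) - p i)) * V (p (S i))) k
  + INR m * psum (fun i => (t - p (S i)) ^ pred m * V (p (S i)) * (p (S i) - p i)) k.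
Proof.
  intros Hpk. unfold Liu_sum at 1.
  rewrite (psum_ext _ (fun i => (t - p i) ^ m * (Z (p i) * (c (p (S i)) - c (p i)))))
    by (intros; ring).
  rewrite psum_by_parts, Hpk, Rminus_diag, pow_i, Rmult_0_l, Rplus_0_l by lia.
  rewrite <- psum_scal, <- !psum_add.
  apply psum_ext. intros i _. unfold Liu_sum. ring.
Qed.

Lemma Liu_sum_pow_error L K eta d k p :
  (forall x y, 0 <= x <= t -> 0 <= y <= t -> Rabs (x ^ m - y ^ m) <= L * Rabs (x - y)) ->
  (forall u h, 0 <= u -> 0 <= h -> u + h <= t ->
     Rabs ((u + h) ^ m - u ^ m - INR m * u ^ pred m * h) <= K * h ^ 2) ->
  0 <= K -> fine_partition 0 t d k p ->
  (forall j, (j <= k)%nat -> Rabs (Liu_sum Z c p j - V (p j)) <= eta) ->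
  Rabs (Liu_sum (fun s => (t - s) ^ m * Z s) c p k - INR m * Iv)
  <= L * eta * t + K * d * B * t
     + INR m * Rabs (psum (fun i => (t - p (S i)) ^ pred m * V (p (S i)) * (p (S i) - p i)) k
                     - Iv).
Proof.
  intros HL HK HK0 Hp Hpre.
  pose proof Hp as (_ & Hp0 & Hpk & Hinc & Hmesh).
  assert (Hrange := fine_partition_range _ _ _ _ _ Hp).
  assert (Hlen : p k - p O = t) by (rewrite Hpk, Hp0; ring).
  rewrite Liu_sum_pow_decomp by exact Hpk.
  match goal with |- Rabs (?S1 + ?S2 + INR m * ?S3 - INR m * Iv) <= _ =>
    set (A1 := S1); set (A2 := S2); set (A3 := S3) end.
  assert (Bound1 : Rabs A1 <= L * eta * t).
  { rewrite <- Hlen. apply psum_mul_abs_le_steps; intros i Hi.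
    - specialize (Hinc i Hi). destruct (Hrange i ltac:(lia)), (Hrange (S i) ltac:(lia)).
      eapply Rle_trans; [apply HL; lra|].
      replace (t - p i - (t - p (S i))) with (p (S i) - p i) by ring.
      rewrite Rabs_pos_eq by lra. lra.
    - apply Hpre. lia. }
  assert (Bound2 : Rabs A2 <= K * d * B * t).
  { rewrite <- Hlen. apply psum_mul_abs_le_steps; intros i Hi.
    - specialize (Hinc i Hi). specialize (Hmesh i Hi).
      destruct (Hrange i ltac:(lia)), (Hrange (S i) ltac:(lia)).
      replace (t - p i) with ((t - p (S i)) + (p (S i) - p i)) at 1 by ring.
      eapply Rle_trans; [apply HK; lra|].
      assert (Hsq : (p (S i) - p i) ^ 2 <= d * (p (S i) - p i)) by nra.
      apply Rmult_le_compat_l with (r := K) in Hsq; [lra | exact HK0].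
    - apply HB, Hrange. lia. }
  replace (A1 + A2 + INR m * A3 - INR m * Iv) with (A1 + A2 + INR m * (A3 - Iv)) by ring.
  pose proof (Rabs_triang A1 A2).
  pose proof (Rabs_triang (A1 + A2) (INR m * (A3 - Iv))).
  rewrite Rabs_mult, (Rabs_pos_eq (INR m)) in * by apply pos_INR.
  lra.
Qed.

Lemma is_Liu_int_by_parts : is_Liu_int (fun s => (t - s) ^ m * Z s) c t (INR m * Iv).
Proof.
  apply is_Liu_int_fine; [exact Ht|]. intros e He.
  destruct (pow_lipschitz m t) as [L [HL0 HL]]; [lra|].
  destruct (pow_second_order m t) as [K [HK0 HK]]; [lra|].
  assert (Hmpos : 0 < INR m) by (apply lt_0_INR; lia).
  assert (HB0 : 0 <= B) by (eapply Rle_trans; [apply Rabs_pos | apply (HB 0); lra]).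
  set (eta := e / 3 / (L * t + 1)).
  set (d3 := e / 3 / (K * B * t + 1)).
  assert (Heta : 0 < eta) by (apply Rdiv_lt_0_compat; nra).
  assert (Hd3 : 0 < d3) by (apply Rdiv_lt_0_compat; [lra|]; pose proof (Rmult_le_pos _ _ HK0 HB0); nra).
  destruct (is_RInt_fine _ 0 t Iv Ht HI (e / 3 / INR m)) as [d1 [Hd1 Hriem]].
  { apply Rdiv_lt_0_compat; lra. }
  destruct (Liu_sum_prefix_close Z c t V Ht HV eta Heta) as [d2 [Hd2 Hpre]].
  exists (Rmin d1 (Rmin d2 d3)). split; [repeat apply Rmin_pos; lra|].
  intros k p Hp.
  assert (Hp1 := fine_partition_mesh_le _ _ _ _ _ _ Hp (Rmin_l _ _)).
  assert (Hp2 := fine_partition_mesh_le _ _ _ _ _ _ Hp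
                   (Rle_trans _ _ _ (Rmin_r _ _) (Rmin_l _ _))).
  assert (Hp3 := fine_partition_mesh_le _ _ _ _ _ _ Hp
                   (Rle_trans _ _ _ (Rmin_r _ _) (Rmin_r _ _))).
  eapply Rle_lt_trans; [exact (Liu_sum_pow_error L K eta d3 k p HL HK HK0 Hp3 (Hpre k p Hp2))|].
  assert (Bound1 : L * eta * t <= e / 3).
  { replace (L * eta * t) with ((L * t) * (e / 3 / (L * t + 1))) by (unfold eta; ring).
    apply mul_div_succ_le; nra. }
  assert (Bound2 : K * d3 * B * t <= e / 3).
  { replace (K * d3 * B * t) with ((K * B * t) * (e / 3 / (K * B * t + 1))) by (unfold d3; ring).
    apply mul_div_succ_le; [|lra]. apply Rmult_le_pos; [apply Rmult_le_pos|]; lra. }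
  assert (Bound3 : INR m * Rabs (psum (fun i => (t - p (S i)) ^ pred m * V (p (S i))
                                                * (p (S i) - p i)) k - Iv) < e / 3).
  { assert (Htags : forall i, (i < k)%nat -> p i <= p (S i) <= p (S i)).
    { intros i Hi. destruct Hp1 as (_ & _ & _ & Hinc & _). specialize (Hinc i Hi). lra. }
    specialize (Hriem k p (fun i => p (S i)) Hp1 Htags).
    apply Rmult_lt_compat_l with (r := INR m) in Hriem; [|exact Hmpos].
    now replace (INR m * (e / 3 / INR m)) with (e / 3) in Hriem by (field; lra). }
  lra.
Qed.

End LiuByParts.

(** * Cauchy's formula for iterated integrals *)

Lemma iter_int_value P m t v : 0 <= t -> iter_int P m t v -> exists y, P t y.
Proof.
  revert t v. induction m as [|m IH]; intros t v Ht H; [now exists v|].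
  destruct H as [G [HG _]]. apply (IH t (G t) Ht), HG. lra.
Qed.

Lemma iter_int_inner P m t v : iter_int P (S m) t v ->
  forall u, 0 <= u <= t -> exists y, P u y.
Proof.
  intros [G [HG _]] u Hu. apply (iter_int_value P m u (G u)); [lra | now apply HG].
Qed.

Lemma iter_int_0 P m v : (forall y, P 0 y -> y = 0) -> iter_int P m 0 v -> v = 0.
Proof.
  intros HP H. destruct m as [|m]; [now apply HP|].
  destruct H as [G [_ HG]].
  rewrite <- (is_RInt_unique _ _ _ _ HG). exact (RInt_point 0 G).
Qed.

Lemma iter_int_peel (P : R -> R -> Prop) V t :
  (forall u y, 0 <= u <= t -> P u y -> y = V u) ->
  forall m s v, 0 <= s <= t -> iter_int P (S m) s v ->
    iter_int (fun s v => is_RInt V 0 s v) m s v.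
Proof.
  intros HPV m. induction m as [|m IH]; intros s v Hs [G [HG HI]].
  - apply is_RInt_ext with G; [|exact HI].
    intros x Hx. rewrite Rmin_left, Rmax_right in Hx by lra.
    apply HPV; [lra | apply HG; lra].
  - exists G. split; [|exact HI]. intros r Hr. apply IH; [lra | now apply HG].
Qed.

Lemma INR_fact_S m v : INR (S m) * (INR (fact m) * v) = INR (fact (S m)) * v.
Proof. rewrite fact_simpl, mult_INR. ring. Qed.

Lemma is_RInt_iter_int m : forall (phi : R -> R) t v, 0 <= t ->
  iter_int (fun s v => is_RInt phi 0 s v) m t v ->
  is_RInt (fun s => (t - s) ^ m * phi s) 0 t (INR (fact m) * v).
Proof.
  induction m as [|m IH]; intros phi t v Ht H.
  { apply is_RInt_ext with phi; [intros; simpl; ring|]. simpl. now rewrite Rmult_1_l. }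
  destruct (Req_dec t 0) as [->|Ht0].
  { rewrite (iter_int_0 _ _ v) with (2 := H), Rmult_0_r; [exact (is_RInt_point _ 0)|].
    intros y Hy. rewrite <- (is_RInt_unique _ _ _ _ Hy). exact (RInt_point 0 phi). }
  set (Phi u := RInt phi 0 u).
  assert (HPhi : forall u, 0 <= u <= t -> is_RInt phi 0 u (Phi u)).
  { intros u Hu. destruct (iter_int_inner _ _ _ _ H u Hu) as [y Hy].
    unfold Phi. now rewrite (is_RInt_unique _ _ _ _ Hy). }
  assert (Hred := iter_int_peel _ Phi t
    (fun u y Hu Hy => eq_sym (is_RInt_unique _ _ _ _ Hy)) m t v ltac:(lra) H).
  destruct (iter_int_value _ _ _ _ Ht Hred) as [y Hy].
  destruct (ex_RInt_bounded Phi 0 t Ht (ex_intro _ y Hy)) as [B HB].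
  assert (HLiu : is_Liu_int (fun s => (t - s) ^ S m * phi s) (fun r => r) t
                   (INR (fact (S m)) * v)).
  { rewrite <- INR_fact_S.
    apply (is_Liu_int_by_parts _ _ Phi t B); [lra | lia | | exact HB | exact (IH Phi t v Ht Hred)].
    intros u Hu. apply is_RInt_is_Liu_int; [lra | now apply HPhi]. }
  destruct (pow_lipschitz (S m) t Ht) as [L [_ HL]].
  assert (Hex : ex_RInt (fun s => (t - s) ^ S m * phi s) 0 t).
  { apply (ex_RInt_lipschitz_mult _ _ _ _ L); [lra | exists (Phi t); apply HPhi; lra|].
    intros x z Hx Hz. replace (x - z) with (- ((t - x) - (t - z))) by ring.
    rewrite Rabs_Ropp. apply HL; lra. }
  destruct Hex as [J HJ].
  now rewrite <- (is_Liu_int_unique _ _ _ _ _ (is_RInt_is_Liu_int _ _ _ Ht HJ) HLiu).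
Qed.

Lemma is_Liu_int_iter_int (Z c : R -> R) m t v : 0 <= t ->
  iter_int (fun s v => is_Liu_int Z c s v) m t v ->
  is_Liu_int (fun s => (t - s) ^ m * Z s) c t (INR (fact m) * v).
Proof.
  intros Ht H. destruct m as [|m].
  { replace (fun s => (t - s) ^ 0 * Z s) with Z
      by (apply functional_extensionality; intros; simpl; ring).
    simpl. now rewrite Rmult_1_l. }
  destruct (Req_dec t 0) as [->|Ht0].
  { rewrite (iter_int_0 _ _ v (is_Liu_int_0 Z c) H). left. split; [reflexivity | ring]. }
  set (V u := epsilon (inhabits 0) (fun y => is_Liu_int Z c u y)).
  assert (HV : forall u, 0 <= u <= t -> is_Liu_int Z c u (V u)).
  { intros u Hu. apply epsilon_spec, (iter_int_inner _ _ _ _ H u Hu). }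
  assert (Hred := iter_int_peel _ V t
    (fun u y Hu Hy => is_Liu_int_unique _ _ _ _ _ Hy (HV u Hu)) m t v ltac:(lra) H).
  destruct (iter_int_value _ _ _ _ Ht Hred) as [y Hy].
  destruct (ex_RInt_bounded V 0 t Ht (ex_intro _ y Hy)) as [B HB].
  rewrite <- INR_fact_S.
  apply (is_Liu_int_by_parts _ _ V t B); [lra | lia | exact HV | exact HB |].
  exact (is_RInt_iter_int m V t v Ht Hred).
Qed.

Theorem lemma3p1 (Gamma : Type) (L : (Gamma -> Prop) -> Prop)
  (M : (Gamma -> Prop) -> R) (HGamma : inhabited Gamma)
  (HU : uncertainty_space L M)
  (n : nat) (Hn : (1 <= n)%nat)
  (C : R -> Gamma -> R) (HC : liu_process L M C)
  (f g : R -> (nat -> R) -> R)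
  (Hfd : depends_on_first n f) (Hgd : depends_on_first n g)
  (Hfc : continuous_on_Rn n f) (Hgc : continuous_on_Rn n g)
  (X0 : nat -> R) (X : R -> Gamma -> R) (D : nat -> R -> Gamma -> R)
  (Hsol : is_solution L M n f g C X0 X D) :
  exists Lam, L Lam /\ M Lam = 1 /\
    forall w, Lam w -> forall t, 0 <= t ->
      exists J I,
        is_RInt (fun s => (t - s) ^ (n - 1) * f s (fun k => D k s w)) 0 t J /\
        is_Liu_int (fun s => (t - s) ^ (n - 1) * g s (fun k => D k s w))
                   (fun s => C s w) t I /\
        X t w = psum (fun k => t ^ k / INR (fact k) * X0 k) n
                + / INR (fact (n - 1)) * J + / INR (fact (n - 1)) * I.
Proof.
  (* The formula holds on every sample path satisfying the integral equation. *)
  destruct Hsol as (_ & _ & Lam & HLam & HMLam & Hpaths).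
  exists Lam. split; [exact HLam|]. split; [exact HMLam|].
  intros w Hw t Ht. destruct (Hpaths w Hw) as (_ & _ & Hint).
  destruct (Hint t Ht) as (vf & vg & Hf & Hg & HX).
  exists (INR (fact (n - 1)) * vf), (INR (fact (n - 1)) * vg).
  split; [exact (is_RInt_iter_int _ _ _ _ Ht Hf)|].
  split; [exact (is_Liu_int_iter_int _ _ _ _ _ Ht Hg)|].
  rewrite HX, <- !Rmult_assoc, Rinv_l, !Rmult_1_l by apply INR_fact_neq_0.
  reflexivity.
Qed.
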